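(* Let $\ket{\phi}$ be a state on $n/2$ qubits (indexed by $[n/2]$) which is at least $\epsilon$-far from every separable state along any internal cut, and let $t$ be even. Then $$\Delta_{\phi,t}:=\sum_{\substack{S\subseteq[n/2]\\ 1\notin S,\ S\ne\emptyset}}\mathrm{Tr}[\phi_S^2]^{t/2}\le 2^{n/2}(1-\epsilon^2)^{t/2}.$$ In particular, a choice of $t=O(n/\epsilon^2)$ makes $\Delta_{\phi,t}$ negligible in $n$.
   Context: $\phi_S$ denotes the reduced density matrix of $\ket{\phi}$ on the qubits in $S$. ''$\epsilon$-far from every separable state along any internal cut'' means: for every nonempty proper $A\subsetneq[n/2]$ and all states $\ket{a}_A,\ket{b}_{[n/2]\setminus A}$, $|\langle\phi|(\ket{a}_A\otimes\ket{b}_{[n/2]\setminus A})|^2\le1-\epsilon^2$. Negligible means smaller than any inverse polynomial in $n$ for large $n$. *)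

(* Amplitudes live in an arbitrary numClosedFieldType C
   (e.g. the complex numbers R[i] for R : realType, or algC). *)
From HB Require Import structures.
From mathcomp Require Import all_boot all_order all_algebra.
Set Implicit Arguments. Unset Strict Implicit. Unset Printing Implicit Defensive.
Import Order.TTheory GRing.Theory Num.Theory Num.Def.
Local Open Scope ring_scope.

Section Qubits.
Variable C : numClosedFieldType.
Variable m : nat.

Definition basis := {ffun 'I_m -> bool}.

(* the qubits of a subsystem S, and the computational basis of S *)
Definition sub_qubits (S : {set 'I_m}) := {i : 'I_m | i \in S}.
Definition asg (S : {set 'I_m}) := {ffun sub_qubits S -> bool}.

Definition glue (S : {set 'I_m}) (a : asg S) (b : asg (~: S)) : basis :=
  [ffun i => match (insub i : option (sub_qubits S)) with
             | Some j => a j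
             | None => match (insub i : option (sub_qubits (~: S))) with
                       | Some k => b k
                       | None => false
                       end
             end].

End Qubits.

(* a (pure) quantum state = unit vector of amplitudes *)
Definition is_unit_vec (C : numClosedFieldType) (I : finType) (v : I -> C) : Prop :=
  \sum_(i : I) `|v i| ^+ 2 = 1.

Definition rdm (C : numClosedFieldType) (m : nat) (psi : basis m -> C)
  (S : {set 'I_m}) (a a' : asg S) : C :=
  \sum_(b : asg (~: S)) psi (glue a b) * (psi (glue a' b))^*.

Definition purity (C : numClosedFieldType) (m : nat) (psi : basis m -> C)
  (S : {set 'I_m}) : C :=
  \sum_(a : asg S) \sum_(a' : asg S) rdm psi a a' * rdm psi a' a.

Definition overlap (C : numClosedFieldType) (m : nat) (psi : basis m -> C)
  (A : {set 'I_m}) (a : asg A -> C) (b : asg (~: A) -> C) : C :=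
  \sum_(x : asg A) \sum_(y : asg (~: A)) (psi (glue x y))^* * (a x * b y).

Definition far_from_separable (C : numClosedFieldType) (m : nat)
  (psi : basis m -> C) (eps : C) : Prop :=
  forall A : {set 'I_m}, A != set0 -> A != setT ->
  forall (a : asg A -> C) (b : asg (~: A) -> C),
    is_unit_vec a -> is_unit_vec b ->
    `|overlap psi a b| ^+ 2 <= 1 - eps ^+ 2.

(* Delta_{phi,t} = sum over nonempty S not containing the first qubit (index 0)
   of Tr[phi_S^2]^(t/2) *)
Definition Delta (C : numClosedFieldType) (m : nat) (psi : basis m -> C) (t : nat) : C :=
  \sum_(S : {set 'I_m} | (S != set0) && [forall i in S, val i != 0%N])
     purity psi S ^+ (t %/ 2).

Definition negligible (C : numClosedFieldType) (f : nat -> C) : Prop :=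
  forall c : nat, exists N : nat, forall n : nat, (N <= n)%N ->
    `|f n| < (n%:R ^+ c)^-1.

(* Write psi as the matrix M x y := psi (glue x y), rows indexed by basis
   states of S and columns by those of its complement.  The overlap with a
   product state a (x) b is then the bilinear form sum a x (M x y)^* b y, so
   the farness hypothesis bounds the operator norm of the conjugate matrix:
   |M^* b|^2 <= (1 - eps^2) |b|^2.  As phi_S a a' = (M^* (M a)) a', the purity
   Tr phi_S^2 = sum_a |M^* (M a)|^2 is at most (1 - eps^2) |psi|^2 = 1 - eps^2
   for every cut, and there are at most 2^m subsets S.  For the asymptotic
   part, (1 - eps^2)^k <= 1/2 as soon as k eps^2 >= 1 (Bernoulli applied to
   (1 + eps^2)^k), so t >= 8 n / eps^2 gives (1 - eps^2)^(t/2) <= 4^-n, which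
   beats the prefactor 2^(n/2) and every polynomial in n. *)

From HB Require Import structures.
From mathcomp Require Import all_boot all_order all_algebra.
From mathcomp Require Import ring zify.
Import Order.TTheory GRing.Theory Num.Theory Num.Def.
Set Implicit Arguments.
Unset Strict Implicit.
Unset Printing Implicit Defensive.

Lemma sqrn_le_exp2 j : 4 <= j -> j ^ 2 <= 2 ^ j.
Proof.
elim: j => [//|j IHj]; rewrite leq_eqVlt => /predU1P[<- //|j_ge4].
by have := IHj j_ge4; rewrite [2 ^ j.+1]expnS; nia.
Qed.

Lemma expn_le_exp2_eventually c : exists N, forall n, N <= n -> n ^ c <= 2 ^ n.
Proof.
exists ((c + 4) * c.+1) => n n_ge.
set j := n %/ c.+1.
have j_ge : c + 4 <= j by rewrite leq_divRL.
have n_lt : n < j.+1 * c.+1 by apply: ltn_ceil.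
have jc_le : j * c.+1 <= n by apply: leq_divM.
have jc_le_exp : j.+1 * c.+1 <= 2 ^ j.
  by apply: leq_trans (sqrn_le_exp2 _) => //; [nia | lia].
apply: leq_trans (_ : n ^ c.+1 <= _); first by rewrite leq_pexp2l //; lia.
apply: leq_trans (_ : (2 ^ j) ^ c.+1 <= _).
  by rewrite leq_exp2r //; apply: ltnW (leq_trans n_lt jc_le_exp).
by rewrite -expnM leq_pexp2l.
Qed.

Local Open Scope ring_scope.

Section SquaredNorm.
Variables (C : numClosedFieldType) (I : finType).

Definition sqnorm (v : I -> C) : C := \sum_i `|v i| ^+ 2.

Lemma sqnorm_ge0 v : 0 <= sqnorm v.
Proof. by apply: sumr_ge0 => i _; apply: exprn_ge0. Qed.

Lemma sqnorm_eq0 v : sqnorm v = 0 -> forall i, v i = 0.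
Proof.
move=> v0 i; apply/eqP; rewrite -normr_eq0 -sqrf_eq0.
by have /psumr_eq0P -> := v0 => // j _; apply: exprn_ge0.
Qed.

Lemma sqnormZ k v : sqnorm (fun i => k * v i) = `|k| ^+ 2 * sqnorm v.
Proof. by rewrite /sqnorm mulr_sumr; apply: eq_bigr => i _; rewrite normrM exprMn. Qed.

Lemma normalize_unit v : sqnorm v != 0 ->
  is_unit_vec (fun i => (sqrtC (sqnorm v))^-1 * v i).
Proof.
move=> v0; rewrite /is_unit_vec -/(sqnorm _) sqnormZ normfV.
by rewrite ger0_norm ?sqrtC_ge0 ?sqnorm_ge0 // exprVn sqrtCK mulVf.
Qed.

End SquaredNorm.

Section OperatorBound.
Variables (C : numClosedFieldType) (X Y : finType) (M : X -> Y -> C).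

Definition pairing (a : X -> C) (b : Y -> C) : C :=
  \sum_x \sum_y (M x y)^* * (a x * b y).

Definition conjmx_mul (b : Y -> C) (x : X) : C := \sum_y (M x y)^* * b y.

Lemma pairingE a b : pairing a b = \sum_x a x * conjmx_mul b x.
Proof.
apply: eq_bigr => x _; rewrite mulr_sumr; apply: eq_bigr => y _.
by rewrite mulrCA.
Qed.

Lemma pairingZ k l a b :
  pairing (fun x => k * a x) (fun y => l * b y) = k * l * pairing a b.
Proof.
rewrite /pairing mulr_sumr; apply: eq_bigr => x _.
by rewrite mulr_sumr; apply: eq_bigr => y _; ring.
Qed.

Variable c : C.
Hypothesis c_ge0 : 0 <= c.
Hypothesis pairing_unit_le : forall a b, is_unit_vec a -> is_unit_vec b ->
  `|pairing a b| ^+ 2 <= c.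

Lemma pairing_le a b : `|pairing a b| ^+ 2 <= c * sqnorm a * sqnorm b.
Proof.
have [a0|a0] := eqVneq (sqnorm a) 0.
  rewrite a0 mulr0 mul0r pairingE big1 ?normr0 ?expr0n // => x _.
  by rewrite (sqnorm_eq0 a0) mul0r.
have [b0|b0] := eqVneq (sqnorm b) 0.
  rewrite b0 mulr0 pairingE big1 ?normr0 ?expr0n // => x _.
  by rewrite /conjmx_mul big1 ?mulr0 // => y _; rewrite (sqnorm_eq0 b0) mulr0.
have := pairing_unit_le (normalize_unit a0) (normalize_unit b0).
rewrite pairingZ !normrM !normfV !(@ger0_norm _ (sqrtC _)) ?sqrtC_ge0 ?sqnorm_ge0 //.
rewrite !exprMn !exprVn !sqrtCK -invfM mulrC ler_pdivrMr; last first.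
  by rewrite mulr_gt0 // lt0r sqnorm_ge0 ?andbT.
by rewrite mulrA.
Qed.

Lemma sqnorm_conjmx_mul_le b : sqnorm (conjmx_mul b) <= c * sqnorm b.
Proof.
set u := conjmx_mul b.
have [u0|u0] := eqVneq (sqnorm u) 0; first by rewrite u0 mulr_ge0 ?sqnorm_ge0.
have pairing_u : pairing (fun x => (u x)^*) b = sqnorm u.
  by rewrite pairingE; apply: eq_bigr => x _; rewrite normCKC.
have := pairing_le (fun x => (u x)^*) b.
rewrite pairing_u.
have -> : sqnorm (fun x => (u x)^*) = sqnorm u.
  by apply: eq_bigr => x _; rewrite norm_conjC.
rewrite ger0_norm ?sqnorm_ge0 // expr2 mulrAC ler_pM2r //.
by rewrite lt0r u0 sqnorm_ge0.
Qed.

End OperatorBound.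

Section Bipartition.
Variables (m : nat) (S : {set 'I_m}).

Definition unglue (f : basis m) : asg S * asg (~: S) :=
  ([ffun j => f (val j)], [ffun k => f (val k)]).

Lemma glueK x y : unglue (glue x y) = (x, y).
Proof.
congr pair; apply/ffunP => j; rewrite !ffunE; first by rewrite valK.
have jS : val j \notin S by have := valP j; rewrite inE.
by rewrite (insubN (sub_qubits S) jS) valK.
Qed.

Lemma ungluK f : glue (unglue f).1 (unglue f).2 = f.
Proof.
apply/ffunP => i; rewrite ffunE /=.
case: insubP => [u _ <-|iS]; first by rewrite ffunE.
have iS' : i \in ~: S by rewrite inE.
by rewrite (insubT (fun i => i \in ~: S) iS') ffunE.
Qed.

Lemma sum_glue (R : nmodType) (F : basis m -> R) :
  \sum_(x : asg S) \sum_(y : asg (~: S)) F (glue x y) = \sum_f F f.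
Proof.
rewrite pair_bigA /= (reindex (fun p : asg S * asg (~: S) => glue p.1 p.2)) //.
by exists unglue => [[x y] _|f _]; rewrite ?glueK ?ungluK.
Qed.

Variables (C : numClosedFieldType) (psi : basis m -> C).
Local Notation M := (fun x y => psi (glue x y)).

Lemma rdm_conj (a a' : asg S) : rdm psi a' a = (rdm psi a a')^*.
Proof.
rewrite /rdm rmorph_sum; apply: eq_bigr => y _.
by rewrite rmorphM /= conjCK mulrC.
Qed.

Lemma purityE :
  purity psi S = \sum_(a : asg S) sqnorm (conjmx_mul M (M a)).
Proof.
apply: eq_bigr => a _; apply: eq_bigr => a' _.
rewrite [rdm psi a' a]rdm_conj -normCK; congr (`|_| ^+ 2).
by apply: eq_bigr => y _; rewrite mulrC.
Qed.

Lemma purity_ge0 : 0 <= purity psi S.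
Proof. by rewrite purityE; apply: sumr_ge0 => a _; apply: sqnorm_ge0. Qed.

Lemma purity_le (c : C) : 0 <= c -> is_unit_vec psi ->
  (forall (a : asg S -> C) (b : asg (~: S) -> C),
     is_unit_vec a -> is_unit_vec b -> `|overlap psi a b| ^+ 2 <= c) ->
  purity psi S <= c.
Proof.
move=> c0 psi1 overlap_le; rewrite purityE.
(* [overlap psi a b] is [pairing M a b] by conversion. *)
apply: le_trans (_ : \sum_a c * sqnorm (M a) <= c).
  by apply: ler_sum => a _; apply: (sqnorm_conjmx_mul_le c0 overlap_le).
by rewrite -mulr_sumr [X in c * X](sum_glue (fun f => `|psi f| ^+ 2)) psi1 mulr1.
Qed.

End Bipartition.

Lemma avoid0_neqT m (S : {set 'I_m}) :
  S != set0 -> [forall i in S, val i != 0%N] -> S != setT.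
Proof.
case/set0Pn=> i _ /forallP S_avoid0; apply/eqP => ST.
have m_gt0 : (0 < m)%N by apply: leq_ltn_trans (ltn_ord i).
by have := S_avoid0 (Ordinal m_gt0); rewrite ST inE.
Qed.

Lemma card_set_ord m : #|{set 'I_m}| = (2 ^ m)%N.
Proof. by rewrite -cardsT -powersetT card_powerset cardsT card_ord. Qed.

Section DeltaBound.
Variables (C : numClosedFieldType) (m : nat) (psi : basis m -> C) (t : nat).

Lemma Delta_ge0 : 0 <= Delta psi t.
Proof. by apply: sumr_ge0 => S _; apply/exprn_ge0/purity_ge0. Qed.

Lemma Delta_le (eps : C) : is_unit_vec psi -> 0 < eps <= 1 ->
  far_from_separable psi eps -> Delta psi t <= 2 ^+ m * (1 - eps ^+ 2) ^+ (t %/ 2).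
Proof.
move=> psi1 /andP[eps_gt0 eps_le1] far.
have c_ge0 : 0 <= 1 - eps ^+ 2 by rewrite subr_ge0 exprn_ile1 // ltW.
rewrite /Delta big_mkcond -[2 ^+ m]natrX -card_set_ord mulr_natl -sumr_const.
apply: ler_sum => S _; case: ifP => [/andP[S0 S_avoid0]|_]; last exact: exprn_ge0.
apply: lerXn2r; rewrite ?nnegrE ?purity_ge0 //.
apply: purity_le => // a b a1 b1; apply: far => //.
exact: avoid0_neqT S0 S_avoid0.
Qed.

End DeltaBound.

Section Decay.
Variable R : numDomainType.

Lemma bernoulli_le (x : R) j : 0 <= x -> 1 + j%:R * x <= (1 + x) ^+ j.
Proof.
move=> x_ge0; elim: j => [|j IHj]; first by rewrite mul0r addr0 expr0.
apply: le_trans (_ : (1 + j%:R * x) * (1 + x) <= _); last first.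
  by rewrite exprSr ler_wpM2r // addr_ge0.
have -> : (1 + j%:R * x) * (1 + x) = 1 + j.+1%:R * x + j%:R * x ^+ 2.
  by rewrite -natr1; ring.
by rewrite lerDl mulr_ge0 ?exprn_ge0.
Qed.

Lemma one_sub_expn_le_half (x : R) k : 0 <= x <= 1 -> 1 <= k%:R * x ->
  2 * (1 - x) ^+ k <= 1.
Proof.
move=> /andP[x_ge0 x_le1] kx_ge1.
have one_sub_ge0 : 0 <= (1 - x) ^+ k by rewrite exprn_ge0 // subr_ge0.
have two_le : 2 <= (1 + x) ^+ k.
  by apply: le_trans (bernoulli_le k x_ge0); rewrite lerD2l.
apply: le_trans (_ : ((1 + x) * (1 - x)) ^+ k <= 1).
  by rewrite exprMn ler_wpM2r.
have -> : (1 + x) * (1 - x) = 1 - x ^+ 2 by ring.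
rewrite exprn_ile1 // ?subr_ge0 ?exprn_ile1 //.
by rewrite lerBlDr lerDl exprn_ge0.
Qed.

Lemma exp2_one_sub_expn_le (x : R) r s : 0 < x <= 1 ->
  (2 * r)%:R <= s%:R * x -> 2 ^+ r * (1 - x) ^+ s <= 1.
Proof.
move=> /andP[x_gt0 x_le1] sx_ge.
have x01 : 0 <= x <= 1 by rewrite ltW.
have y_ge0 : 0 <= 1 - x by rewrite subr_ge0.
have y_le1 : 1 - x <= 1 by rewrite lerBlDr lerDl ltW.
have [->|r_gt0] := posnP r; first by rewrite mul1r exprn_ile1.
set j := (s %/ r)%N.
have jx_ge1 : 1 <= j%:R * x.
  have s_lt : (s < j.+1 * r)%N by apply: ltn_ceil.
  have s_le : s%:R <= (j.+1 * r)%:R :> R by rewrite ler_nat ltnW.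
  have := le_trans sx_ge (ler_wpM2r (ltW x_gt0) s_le).
  rewrite mulnC [(j.+1 * r)%N]mulnC !natrM -mulrA ler_pM2l ?ltr0n //.
  rewrite -[j.+1%:R]natr1 mulrDl mul1r => two_le.
  rewrite -(lerD2r x); apply: le_trans two_le.
  by rewrite -[2]natr1 addrC lerD2r.
have s_ge : (j * r <= s)%N by apply: leq_divM.
apply: le_trans (_ : (2 * (1 - x) ^+ j) ^+ r <= 1).
  by rewrite exprMn -exprM ler_wpM2l ?exprn_ge0 // ler_wiXn2l.
by rewrite exprn_ile1 ?mulr_ge0 ?exprn_ge0 // one_sub_expn_le_half.
Qed.

Lemma exp2_half_one_sub_expn_lt (x : R) n s : (0 < n)%N -> 0 < x <= 1 ->
  (4 * n)%:R <= s%:R * x -> 2 ^+ n./2 * (1 - x) ^+ s * 2 ^+ n < 1.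
Proof.
move=> n_gt0 x01 sx_ge.
have decay : 2 ^+ (2 * n) * (1 - x) ^+ s <= 1.
  by apply: exp2_one_sub_expn_le; rewrite // mulnA.
rewrite -(ltr_pM2r (exprn_gt0 n (ltr0n R 2))) mul1r -!mulrA -exprD addnn -mul2n.
apply: le_lt_trans (_ : 2 ^+ n./2 * 1 < _).
  by rewrite ler_wpM2l ?exprn_ge0 // mulrC.
by rewrite mulr1 ltr_eXn2l ?ltr1n //; lia.
Qed.

End Decay.

Lemma negligible_exp2 (C : numClosedFieldType) (f : nat -> C) N :
  (forall n, (N <= n)%N -> `|f n| * 2 ^+ n < 1) -> negligible f.
Proof.
move=> f_lt c; have [N' nc_le] := expn_le_exp2_eventually c.
exists (maxn 1 (maxn N N')) => n; rewrite !geq_max => /and3P[n_gt0 n_geN n_geN'].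
rewrite -div1r ltr_pdivlMr ?exprn_gt0 ?ltr0n //.
apply: le_lt_trans (f_lt n n_geN); rewrite ler_wpM2l //.
by rewrite -natrX -[2 ^+ n]natrX ler_nat nc_le.
Qed.

Theorem fact4p8 (C : numClosedFieldType) :
  (forall (m : nat) (psi : basis m -> C) (eps : C) (t : nat),
     is_unit_vec psi -> 0 < eps <= 1 -> far_from_separable psi eps ->
     ~~ odd t ->
     Delta psi t <= 2 ^+ m * (1 - eps ^+ 2) ^+ (t %/ 2))
  /\
  (exists K : C, 0 < K /\
     forall (psi : forall n : nat, basis n./2 -> C) (eps : nat -> C) (t : nat -> nat),
       (forall n, is_unit_vec (psi n)) ->
       (forall n, 0 < eps n <= 1) ->
       (forall n, far_from_separable (psi n) (eps n)) ->
       (forall n, ~~ odd (t n)) ->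
       (forall n, K * n%:R / eps n ^+ 2 <= (t n)%:R) ->
       negligible (fun n => Delta (psi n) (t n))).
Proof.
split=> [m psi eps t psi1 eps01 far _|]; first exact: Delta_le.
exists 8; split=> // psi eps t psi1 eps01 far t_even t_ge.
apply: (@negligible_exp2 _ _ 1) => n n_gt0.
have /andP[eps_gt0 eps_le1] := eps01 n.
set x := eps n ^+ 2; set s := (t n %/ 2)%N.
have x01 : 0 < x <= 1 by rewrite exprn_gt0 // exprn_ile1 // ltW.
have sx_ge : (4 * n)%:R <= s%:R * x.
  have t2s : t n = (2 * s)%N by rewrite mulnC divnK // dvdn2 t_even.
  have := t_ge n; rewrite ler_pdivrMr ?exprn_gt0 // t2s -/x => tx_ge.
  by rewrite -(ler_pM2l (ltr0n C 2)) mulrA -!natrM mulnA natrM; exact: tx_ge.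
apply: le_lt_trans (exp2_half_one_sub_expn_lt n_gt0 x01 sx_ge).
rewrite ger0_norm ?Delta_ge0 // ler_wpM2r ?exprn_ge0 //.
exact: Delta_le.
Qed.
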